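(* Let $T$ be a quasi-binary tree with vertex weight function $\omega:V(T)\to\mathbb{R}$. Let $k\ge 2$ be an integer and let $\gamma\in\mathbb{R}$ with $\gamma\ge \omega_3$. If $$\omega(T)\ge \max\left\{\frac{2k-1}{2}\,\omega_1-\frac{1}{2}\,\gamma,\ (2k-1)\,\omega_2-k\gamma\right\},$$ then $$\beta_k(T)\ge \frac{\omega(T)-(k-1)\gamma}{2k-1}.$$
   Context: A binary tree is a tree in which every vertex has degree $3$, except for pending vertices (degree $1$) and one root vertex (degree $2$). A tree is quasi-binary if it is a connected subgraph of a binary tree; in particular every vertex has degree $1$, $2$ or $3$. Given a weight function $\omega:V(T)\to\mathbb{R}$, for a subgraph $H$ write $\omega(H)=\sum_{v\in V(H)}\omega(v)$. For $i=1,2,3$ let $V_i$ be the set of vertices of degree $i$, and let $\omega_i=\max\{\omega(v): v\in V_j \text{ for some } j \text{ with } i\le j\le 3\}$ (the maximum weight of a vertex of degree at least $i$). For an integer $1\le k\le |V(T)|-1$, a $k$-separator of $T$ is a set $F\subseteq E(T)$ with $|F|=k-1$; its deletion yields $k$ connected components $C^1_F(T),\dots,C^k_F(T)$. Define $$\beta_k(T)=\max_{F\subseteq E(T),\,|F|=k-1}\ \min_{1\le i\le k}\omega(C^i_F(T)).$$ *)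

From HB Require Import structures.
From mathcomp Require Import all_boot all_order all_algebra.
Set Implicit Arguments. Unset Strict Implicit. Unset Printing Implicit Defensive.
Import Order.TTheory GRing.Theory Num.Theory.
Local Open Scope ring_scope.

Section Graphs.
Variable T : finType.
Variable e : rel T.

Definition deg (v : T) : nat := #|[set u | e v u]|.

Definition edges : {set {set T}} := [set [set x; y] | x in T, y in T & e x y].

Definition is_tree : Prop :=
  [/\ 0 < #|T|, symmetric e, irreflexive e,
      (forall x y, connect e x y) &
      (forall s : seq T, uniq s -> 3 <= size s -> ~~ cycle e s)]%N.

Definition is_binary_tree : Prop :=
  is_tree /\ exists r : T, deg r = 2%N /\
    forall v, v != r -> deg v = 1%N \/ deg v = 3%N.
End Graphs.

Definition is_quasi_binary_tree (T : finType) (e : rel T) : Prop :=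
  is_tree e /\
  exists (B : finType) (eB : rel B) (f : T -> B),
    [/\ is_binary_tree eB, injective f & forall x y, e x y -> eB (f x) (f y)].

Section Beta.
Variable R : realFieldType.
Variable T : finType.
Variable e : rel T.
Variable w : T -> R.

Definition wset (A : {set T}) : R := \sum_(v in A) w v.
Definition wT : R := \sum_(v : T) w v.

Definition del_rel (F : {set {set T}}) : rel T :=
  fun x y => e x y && ([set x; y] \notin F).

Definition components (F : {set {set T}}) : {set {set T}} :=
  [set [set y | connect (del_rel F) x y] | x in T].

Definition seqmin (s : seq R) : R := foldr Num.min (head 0 s) s.
Definition seqmax (s : seq R) : R := foldr Num.max (head 0 s) s.

Definition min_comp_weight (F : {set {set T}}) : R :=
  seqmin [seq wset C | C <- enum (components F)].

Definition separators (k : nat) : seq {set {set T}} :=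
  [seq F : {set {set T}} <- enum {set {set T}} | (F \subset edges e) && (#|F| == k.-1)%N].

Definition beta (k : nat) : R := seqmax [seq min_comp_weight F | F <- separators k].

Definition is_omega (i : nat) (x : R) : Prop :=
  (exists v, (i <= deg e v)%N /\ w v = x) /\ (forall v, (i <= deg e v)%N -> w v <= x).
End Beta.

(* Put L := (w(T) - (k-1) gamma) / (2k-1).  The hypotheses on w(T) say that every vertex
   weighs at most 2L + gamma, every vertex of degree at least 2 at most L + gamma, and that
   w(T) = (k-1)(2L + gamma) + L.  Given a subtree S with w(S) >= j(2L + gamma) + L, cut an edge pv
   whose branch at v (the side of v) weighs at least L and has as few vertices as possible.  Each
   sub-branch below v then weighs less than L, and v has at most two of them, so the degree bounds
   give weight at most 2L + gamma to the branch.  The rest of S is a subtree of weight at least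
   (j-1)(2L + gamma) + L, and induction produces k-1 cuts leaving only components of weight at
   least L.  When 2L + gamma < 0 every vertex weighs at least L and a leaf edge is cut instead. *)

From HB Require Import structures.
From mathcomp Require Import all_boot all_order all_algebra.
From mathcomp Require Import ring lra zify.
Set Implicit Arguments. Unset Strict Implicit. Unset Printing Implicit Defensive.
Import Order.TTheory GRing.Theory Num.Theory.

Section Connect.
Variable T : finType.

Lemma connect_sub_from (r r' : rel T) x0 y :
  (forall a b, connect r x0 a -> r a b -> r' a b) -> connect r x0 y -> connect r' x0 y.
Proof.
move=> rr' /connectP[p rp ->].
suff: forall a, connect r x0 a -> path r a p -> connect r' a (last a p) by apply.
elim: p {rp} => [|b p IHp] a x0a //= /andP[rab rp].
apply: connect_trans (connect1 (rr' _ _ x0a rab)) _.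
exact: IHp (connect_trans x0a (connect1 rab)) rp.
Qed.

Lemma connect_neq_step (r : rel T) x y : connect r x y -> x != y -> exists u, r x u.
Proof.
case/connectP=> [[|u s] /= rs ->]; first by rewrite eqxx.
by move=> _; exists u; case/andP: rs.
Qed.

Lemma connect_closed_mem (r : rel T) (A : {set T}) x y :
  (forall a b, r a b -> (a \in A) = (b \in A)) -> connect r x y -> (x \in A) = (y \in A).
Proof.
move=> rA /connectP[p rp ->]; elim: p x rp => [|b p IHp] x //= /andP[rxb rp].
by rewrite (rA _ _ rxb); apply: IHp.
Qed.

End Connect.

Section CardBounds.
Local Open Scope ring_scope.
Variables (R : realFieldType) (I : finType) (P : {set I}) (f : I -> R) (c : R).

Lemma sum_le_card : {in P, forall i, f i <= c} -> \sum_(i in P) f i <= #|P|%:R * c.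
Proof. by move=> fc; rewrite mulr_natl -sumr_const; apply: ler_sum. Qed.

Lemma sum_lt_card : {in P, forall i, f i < c} -> (0 < #|P|)%N ->
  \sum_(i in P) f i < #|P|%:R * c.
Proof.
move=> fc /card_gt0P[i0 Pi0]; rewrite mulr_natl -sumr_const; apply: ltr_sum => //.
by apply/hasP; exists i0 => //; rewrite mem_index_enum.
Qed.

End CardBounds.

Section Forest.
Variables (T : finType) (e : rel T).
Hypotheses (sym_e : symmetric e) (irr_e : irreflexive e).
Hypothesis acyclic_e : forall s : seq T, uniq s -> (3 <= size s)%N -> ~~ cycle e s.

Definition induced (X : {set T}) : rel T := fun x y => [&& e x y, x \in X & y \in X].
Definition comp_in (X : {set T}) v : {set T} := [set y | connect (induced X) v y].
Definition connected_in (X : {set T}) : Prop :=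
  forall x y, x \in X -> y \in X -> connect (induced X) x y.
Definition nbrs_in (X : {set T}) v : {set T} := [set u in X | e v u].

(* For an edge [pv] of a tree on [S], the subtree of [S] hanging at [v], away from [p]. *)
Definition branch (S : {set T}) p v : {set T} := comp_in (S :\ p) v.

Lemma induced_sym (X : {set T}) : symmetric (induced X).
Proof. by move=> x y; rewrite /induced sym_e; case: (x \in X); case: (y \in X). Qed.

Lemma edge_neq x y : e x y -> x != y.
Proof. by apply: contraTneq => ->; rewrite irr_e. Qed.

Lemma mem_comp_in (X : {set T}) v : v \in comp_in X v.
Proof. by rewrite inE connect0. Qed.

Lemma path_induced_sub (X : {set T}) a p : path (induced X) a p -> {subset p <= X}.
Proof.
elim: p a => [|b p IHp] a //= /andP[/and3P[_ _ bX] bp] y.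
by rewrite inE => /orP[/eqP-> //|]; exact: IHp b bp y.
Qed.

Lemma connect_induced_subset (X Y : {set T}) x y :
  X \subset Y -> connect (induced X) x y -> connect (induced Y) x y.
Proof.
move=> XY; apply: connect_sub => a b /and3P[eab aX bX]; apply: connect1.
by rewrite /induced eab (subsetP XY _ aX) (subsetP XY _ bX).
Qed.

Lemma comp_in_sub (X : {set T}) v : v \in X -> comp_in X v \subset X.
Proof.
move=> vX; apply/subsetP => y; rewrite inE => /connectP[[_ -> //|b p bp ->]].
exact: (path_induced_sub bp (mem_last b p)).
Qed.

Lemma comp_in_connected (S : {set T}) x : connected_in S -> x \in S -> comp_in S x = S.
Proof.
move=> cS xS; apply/eqP; rewrite eqEsubset comp_in_sub //.
by apply/subsetP => y yS; rewrite inE cS.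
Qed.

(* Two distinct neighbours of [z] joined outside [z] would close a cycle through [z]. *)
Lemma nbrs_disconnected (Y : {set T}) z x y :
  z \notin Y -> e z x -> e z y -> x != y -> ~~ connect (induced Y) x y.
Proof.
move=> zY ezx ezy xy; apply/negP => /connectP[p xp Ey].
case: (shortenP xp) Ey => q xq Uq _ Ey.
have qY := path_induced_sub xq.
have q_nil : q != [::] by apply: contraNneq xy => q0; rewrite Ey q0.
have := acyclic_e (s := z :: x :: q).
rewrite cons_uniq Uq andbT.
have -> : z \notin x :: q.
  rewrite inE negb_or (edge_neq ezx) /=.
  by apply: contra zY => /qY.
have -> : (3 <= (size q).+2)%N by case: q q_nil {xq Uq qY Ey}.
move/(_ isT isT); rewrite /= ezx rcons_path -Ey sym_e ezy andbT.
by rewrite (sub_path _ xq) // => a b /andP[].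
Qed.

Lemma comp_in_setD1 (Y : {set T}) p u :
  p \notin comp_in Y u -> comp_in (Y :\ p) u = comp_in Y u.
Proof.
move=> pY; apply/setP=> y; rewrite !inE; apply/idP/idP.
  by apply: connect_induced_subset; apply: subsetDl.
apply: connect_sub_from => a b ua /and3P[eab aY bY].
have ub : b \in comp_in Y u.
  by rewrite inE (connect_trans ua) // connect1 // /induced eab aY bY.
have ap : a != p by apply: contraNneq pY => <-; rewrite inE.
have bp : b != p by apply: contraNneq pY => <-.
by rewrite /induced eab !in_setD1 ap bp aY bY.
Qed.

Lemma comp_in_decomp (X : {set T}) v : v \in X ->
  comp_in X v = v |: \bigcup_(u in nbrs_in X v) comp_in (X :\ v) u.
Proof.
move=> vX; apply/setP=> y; rewrite !inE; apply/idP/idP; last first.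
  case/orP=> [/eqP-> //|/bigcupP[u]]; rewrite inE => /andP[uX evu].
  rewrite inE => uy; apply: connect_trans (connect1 (_ : induced X v u)) _.
    by rewrite /induced evu vX uX.
  by apply: connect_induced_subset uy; apply: subsetDl.
case/connectP=> p vp ->; case: (shortenP vp) => [[|u q] /=]; first by rewrite eqxx.
case/andP=> /and3P[evu _ uX] uq; rewrite inE negb_or => /andP[/andP[vu vq] Uq] _.
apply/orP; right; apply/bigcupP; exists u; first by rewrite inE uX evu.
rewrite inE; apply/connectP; exists q => //.
apply: (sub_in_path (P := [pred a | a != v]) _ _ uq); last first.
  by rewrite /= eq_sym vu; apply/allP => a aq; apply: contraNneq vq => <-.
move=> a b; rewrite !inE => av bv /and3P[eab aX bX].
by rewrite /induced eab !in_setD1 av bv aX bX.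
Qed.

Lemma comp_in_nbrs_disjoint (X : {set T}) v u1 u2 :
  u1 \in nbrs_in X v -> u2 \in nbrs_in X v -> u1 != u2 ->
  [disjoint comp_in (X :\ v) u1 & comp_in (X :\ v) u2].
Proof.
rewrite !inE => /andP[_ evu1] /andP[_ evu2] u12.
apply/pred0P => y /=; apply/negP => /andP[]; rewrite !inE => u1y u2y.
have /negP[] := nbrs_disconnected (negbT (setD11 v X)) evu1 evu2 u12.
by apply: connect_trans u1y _; rewrite (sym_connect_sym (@induced_sym _)).
Qed.

Lemma nbrs_in0 (X : {set T}) v : v \in X -> nbrs_in X v = set0 -> comp_in X v = [set v].
Proof. by move=> vX nv0; rewrite comp_in_decomp // nv0 big_set0 setU0. Qed.

Lemma card_nbrs_in_le_deg (X : {set T}) v : (#|nbrs_in X v| <= deg e v)%N.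
Proof. by apply: subset_leq_card; apply/subsetP => u; rewrite !inE => /andP[]. Qed.

Lemma card_nbrs_in_setD1_lt_deg (S : {set T}) p v : e p v -> (#|nbrs_in (S :\ p) v| < deg e v)%N.
Proof.
move=> epv; rewrite /deg [#|[set u | e v u]|](cardsD1 p) inE sym_e epv add1n ltnS.
by apply: subset_leq_card; apply/subsetP => u; rewrite !inE => /andP[/andP[-> _] ->].
Qed.

Lemma branch_nbrs_in (S : {set T}) p v u : e p v -> u \in nbrs_in (S :\ p) v ->
  comp_in ((S :\ p) :\ v) u = branch S v u.
Proof.
move=> epv; rewrite inE in_setD1 => /andP[/andP[up uS] evu].
rewrite setDDl setUC -setDDl; apply: comp_in_setD1.
by rewrite inE; apply: (nbrs_disconnected _ evu _ up); rewrite ?setD11 // sym_e.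
Qed.

Lemma branch_child_proper (S : {set T}) p v u : e p v -> v \in S ->
  u \in nbrs_in (S :\ p) v -> branch S v u \proper branch S p v.
Proof.
move=> epv vS uC; have vSp : v \in S :\ p by rewrite in_setD1 vS eq_sym edge_neq.
have uSpv : u \in S :\ p :\ v.
  move: uC; rewrite inE => /andP[uSp /edge_neq vu].
  by rewrite in_setD1 uSp eq_sym vu.
rewrite -(branch_nbrs_in epv uC) properE /branch (comp_in_decomp vSp).
apply/andP; split; first by apply: subsetU; rewrite (bigcup_sup _ uC) orbT.
apply/subsetPn; exists v.
  by rewrite !inE eqxx.
by apply: contraFN (setD11 v (S :\ p)) => /(subsetP (comp_in_sub uSpv)).
Qed.

Lemma min_branch_edge (S : {set T}) (P : T -> T -> bool) :
  (exists p v, [&& e p v, p \in S, v \in S & P p v]) ->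
  exists p v, [/\ e p v, p \in S, v \in S, P p v &
                  forall u, u \in nbrs_in (S :\ p) v -> ~~ P v u].
Proof.
move=> exP.
pose size_ok n := [exists q : T * T,
  [&& e q.1 q.2, q.1 \in S, q.2 \in S, P q.1 q.2 & #|branch S q.1 q.2| == n]].
have ex_n : exists n, size_ok n.
  case: exP => p [v /and4P[epv pS vS Ppv]]; exists #|branch S p v|.
  by apply/existsP; exists (p, v); rewrite /= epv pS vS Ppv eqxx.
case: (ex_minnP ex_n) => n /existsP[[p v] /and5P[/= epv pS vS Ppv /eqP szn]] min_n.
exists p, v; split => // u uC; apply/negP => Pvu.
have uS : u \in S by move: uC; rewrite inE in_setD1 => /andP[/andP[_ ->]].
have : size_ok #|branch S v u|.
  apply/existsP; exists (v, u); rewrite /= vS uS Pvu eqxx !andbT.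
  by move: uC; rewrite inE => /andP[].
move/min_n; rewrite -szn leqNgt => /negP; apply.
exact: proper_card (branch_child_proper epv vS uC).
Qed.

Lemma leaf_edge (S : {set T}) : connected_in S -> (1 < #|S|)%N ->
  exists p v, [/\ e p v, p \in S, v \in S & branch S p v = [set v]].
Proof.
move=> cS /card_gt1P[x [y [xS yS xy]]].
have [u /and3P[exu _ uS]] := connect_neq_step (cS x y xS yS) xy.
have [|p [v [epv pS vS _ no_nbr]]] := @min_branch_edge S (fun _ _ => true).
  by exists x, u; rewrite exu xS uS.
exists p, v; split => //; apply: nbrs_in0; first by rewrite in_setD1 vS eq_sym edge_neq.
by apply/eqP; rewrite -subset0; apply/subsetP => u' /no_nbr.
Qed.

Definition cut_rel (S : {set T}) (F : {set {set T}}) : rel T :=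
  fun x y => [&& e x y, x \in S, y \in S & [set x; y] \notin F].
Definition cut_comp (S : {set T}) F x : {set T} := [set y | connect (cut_rel S F) x y].
Definition edges_in (S : {set T}) (F : {set {set T}}) : Prop :=
  forall f, f \in F -> exists a b, [/\ a \in S, b \in S, e a b & f = [set a; b]].

Lemma cut_rel_sym S F : symmetric (cut_rel S F).
Proof.
move=> x y; rewrite /cut_rel sym_e setUC.
by case: (x \in S); case: (y \in S); rewrite ?andbF.
Qed.

Section Cut.
Variables (S : {set T}) (p v : T).
Hypotheses (epv : e p v) (pS : p \in S) (vS : v \in S).
Let A := branch S p v.
Let B := S :\: A.

Lemma branch_subset : A \subset S :\ p.
Proof. by apply: comp_in_sub; rewrite in_setD1 vS eq_sym edge_neq. Qed.

Lemma edge_out_of_branch a b : a \in A -> b \in S -> e a b -> b \notin A -> a = v /\ b = p.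
Proof.
move=> aA bS eab bA; have aSp := subsetP branch_subset _ aA.
have bp : b = p.
  apply/eqP; apply: contraNT bA => bp; rewrite inE (connect_trans (_ : connect _ v a)) //.
    by move: aA; rewrite inE.
  by apply: connect1; rewrite /induced eab aSp in_setD1 bp bS.
split=> //; apply/eqP; apply: contraT => av; exfalso.
have epa : e p a by rewrite sym_e -bp.
have va : v != a by rewrite eq_sym.
have /negP[] := nbrs_disconnected (negbT (setD11 p S)) epv epa va.
by move: aA; rewrite inE.
Qed.

Lemma connect_compl_to_root a : a \in B -> connect (induced S) a p -> connect (induced B) a p.
Proof.
move=> aB /connectP[s]; elim: s a aB => [|b s IHs] a aB /=; first by move=> _ ->.
case/andP=> /and3P[eab aS bS] bs Ep.
have [-> | ap] := eqVneq a p; first exact: connect0.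
have bB : b \in B.
  rewrite in_setD bS andbT; apply/negP => bA.
  have aA : a \notin A by move: aB; rewrite in_setD => /andP[].
  have eba : e b a by rewrite sym_e.
  by have [_ /eqP] := edge_out_of_branch bA aS eba aA; rewrite (negbTE ap).
apply: connect_trans (IHs _ bB bs Ep); apply: connect1.
by rewrite /induced eab aB bB.
Qed.

Lemma connected_in_compl : connected_in S -> connected_in B.
Proof.
move=> cS x y xB yB.
have xS : x \in S by move: xB; rewrite in_setD => /andP[].
have yS : y \in S by move: yB; rewrite in_setD => /andP[].
apply: connect_trans (connect_compl_to_root xB (cS _ _ xS pS)) _.
by rewrite (sym_connect_sym (@induced_sym _)) connect_compl_to_root // cS.
Qed.

Variable F' : {set {set T}}.
Hypothesis F'B : edges_in B F'.
Let F := [set p; v] |: F'.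

Lemma branch_edge_notin a b : a \in A -> [set a; b] \notin F'.
Proof.
move=> aA; apply/negP => /F'B[x [y [xB yB _ E]]].
have : a \in [set x; y] by rewrite -E !inE eqxx.
by rewrite !inE => /orP[] /eqP E'; [move: xB | move: yB]; rewrite -E' in_setD aA.
Qed.

Lemma cut_edge_notin : [set p; v] \notin F'.
Proof. by rewrite setUC; apply: branch_edge_notin; apply: mem_comp_in. Qed.

Lemma cut_rel_mem_branch a b : cut_rel S F a b -> (a \in A) = (b \in A).
Proof.
case/and4P=> eab aS bS nF.
case aA: (a \in A); case bA: (b \in A) => //.
  have [av bp] := edge_out_of_branch aA bS eab (negbT bA).
  by move: nF; rewrite av bp !inE setUC eqxx.
have eba : e b a by rewrite sym_e.
have [bv ap] := edge_out_of_branch bA aS eba (negbT aA).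
by move: nF; rewrite bv ap !inE eqxx.
Qed.

Lemma cut_comp_branch x : x \in A -> cut_comp S F x = A.
Proof.
move=> xA; apply/setP=> y; rewrite inE; apply/idP/idP.
  by move/(connect_closed_mem cut_rel_mem_branch); rewrite xA.
have from_v z : z \in A -> connect (cut_rel S F) v z.
  rewrite inE; apply: connect_sub_from => a b va /and3P[eab aSp bSp].
  have aA : a \in A by rewrite inE.
  move: aSp bSp; rewrite !in_setD1 => /andP[ap aS] /andP[bp bS].
  rewrite /cut_rel eab aS bS in_setU1 negb_or branch_edge_notin // andbT.
  apply/eqP => E; have : p \in [set a; b] by rewrite E !inE eqxx.
  by rewrite !inE => /orP[]/eqP E'; [move: ap | move: bp]; rewrite E' eqxx.
move=> yA; apply: connect_trans (from_v _ yA).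
by rewrite (sym_connect_sym (@cut_rel_sym _ _)) from_v.
Qed.

Lemma cut_comp_compl x : x \in B -> cut_comp S F x = cut_comp B F' x.
Proof.
move=> xB; have /andP[xA xS] : (x \notin A) && (x \in S) by rewrite -in_setD.
apply/setP=> y; rewrite !inE; apply/idP/idP.
  apply: connect_sub_from => a b xa rab.
  have aA : (a \in A) = false by rewrite -(connect_closed_mem cut_rel_mem_branch xa) (negbTE xA).
  have bA : (b \in A) = false by rewrite -(cut_rel_mem_branch rab).
  move: rab => /and4P[eab aS bS nF].
  rewrite /cut_rel eab !in_setD aA bA aS bS /=.
  by move: nF; rewrite in_setU1 negb_or => /andP[].
apply: connect_sub => a b /and4P[eab aB bB nF]; apply: connect1.
move: aB bB; rewrite !in_setD => /andP[aA aS] /andP[bA bS].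
rewrite /cut_rel eab aS bS in_setU1 negb_or nF !andbT.
apply/eqP => E; have : v \in [set a; b] by rewrite E !inE eqxx orbT.
by rewrite !inE => /orP[]/eqP E'; [move: aA | move: bA]; rewrite -E' mem_comp_in.
Qed.

End Cut.

Section Weights.
Local Open Scope ring_scope.
Variables (R : realFieldType) (w : T -> R).

Lemma wset_comp_in_decomp (X : {set T}) v : v \in X ->
  wset w (comp_in X v) = w v + \sum_(u in nbrs_in X v) wset w (comp_in (X :\ v) u).
Proof.
move=> vX; rewrite /wset comp_in_decomp // big_setU1 /=; last first.
  apply/bigcupP => -[u uC]; apply/negP.
  by apply: contraFN (setD11 v X) => /(subsetP (comp_in_sub _)); apply; move: uC;
    rewrite !inE => /andP[uX /edge_neq]; rewrite eq_sym => ->.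
congr (_ + _).
pose G u := if u \in nbrs_in X v then comp_in (X :\ v) u else set0.
have -> : \bigcup_(u in nbrs_in X v) comp_in (X :\ v) u = \bigcup_u G u.
  apply/setP => y; apply/bigcupP/bigcupP => -[u uC yu].
    by exists u => //; rewrite /G uC.
  by exists u; rewrite /G in yu; case: (u \in nbrs_in X v) yu => //; rewrite inE.
rewrite partition_disjoint_bigcup; last first.
  move=> i j ij; rewrite /G.
  case iC: (i \in nbrs_in X v); case jC: (j \in nbrs_in X v);
    by rewrite ?comp_in_nbrs_disjoint // disjoints_subset ?sub0set ?setC0 ?subsetT.
rewrite [RHS]big_mkcond /=; apply: eq_bigr => u _; rewrite /G.
by case: (u \in nbrs_in X v) => //; rewrite big_set0.
Qed.

Lemma wset_setD (S A : {set T}) : A \subset S -> wset w S = wset w A + wset w (S :\: A).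
Proof. by move=> AS; rewrite /wset (big_setID A) (setIidPr AS). Qed.

Variables (L g : R).
Hypothesis w_le : forall v, w v <= 2 * L + g.
Hypothesis w_deg2 : forall v, (2 <= deg e v)%N -> w v <= L + g.
Hypothesis w_deg3 : forall v, (3 <= deg e v)%N -> w v <= g.
Hypothesis deg_le3 : forall v, (deg e v <= 3)%N.

Lemma light_branch_weight (S : {set T}) p v : e p v -> v \in S ->
  {in nbrs_in (S :\ p) v, forall u, wset w (branch S v u) < L} ->
  wset w (branch S p v) <= 2 * L + g /\
  ((0 < #|nbrs_in (S :\ p) v|)%N -> wset w (branch S p v) < 3 * L + g).
Proof.
move=> epv vS light; have vSp : v \in S :\ p by rewrite in_setD1 vS eq_sym edge_neq.
rewrite /branch wset_comp_in_decomp //.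
under eq_bigr => u uC do rewrite (branch_nbrs_in epv uC).
have s_le := sum_le_card (fun u uC => ltW (light u uC)).
have s_lt := sum_lt_card light.
(* The more children [v] has below [p], the larger its degree and the smaller its weight. *)
have := card_nbrs_in_setD1_lt_deg S epv; have := deg_le3 v; have := w_le v.
move: s_le s_lt (@w_deg2 v) (@w_deg3 v); set s := \sum_(_ in _) _.
case: #|_| => [|[|[|c]]] s_le s_lt wv2 wv3 wv deg3 deg_gt.
- by split=> //; rewrite mul0r in s_le; lra.
- have := s_lt isT; have := wv2 deg_gt; rewrite mul1r; split; lra.
- have := s_lt isT; have := wv3 deg_gt; split; first lra.
  by move=> _; case: (leP 0 L) => L0; lra.
- by have := leq_trans deg_gt deg3.
Qed.

Lemma heavy_edge_exists (S : {set T}) : connected_in S -> (1 < #|S|)%N ->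
  3 * L + g <= wset w S ->
  exists p v, [&& e p v, p \in S, v \in S & L <= wset w (branch S p v)].
Proof.
move=> cS S2 heavyS; have [x xS] : exists x, x \in S by apply/card_gt0P; apply: ltnW.
case: (pickP [pred u | (u \in nbrs_in S x) && (L <= wset w (branch S x u))]).
  move=> u /andP[]; rewrite inE => /andP[uS exu] Lu.
  by exists x, u; rewrite exu xS uS Lu.
move=> no_heavy; exfalso.
have light : {in nbrs_in S x, forall u, wset w (branch S x u) < L}.
  by move=> u uC; move: (no_heavy u); rewrite /= uC /= ltNge => ->.
have s_lt := sum_lt_card light.
have := wset_comp_in_decomp xS; rewrite comp_in_connected // => Sx.
have nbrs_gt0 : (0 < #|nbrs_in S x|)%N.
  rewrite lt0n cards_eq0; apply: contraTneq S2 => nx0.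
  by rewrite -(comp_in_connected cS xS) (nbrs_in0 xS nx0) cards1.
have := card_nbrs_in_le_deg S x; have := deg_le3 x; have := w_le x.
move: nbrs_gt0 s_lt (@w_deg2 x) (@w_deg3 x) Sx; set s := \sum_(_ in _) _.
case: #|_| => [|[|[|[|c]]]] // _ s_lt wx2 wx3 Sx wx deg3 deg_ge.
- by have := s_lt isT; rewrite mul1r; lra.
- by have := s_lt isT; have := wx2 deg_ge; lra.
- by have := s_lt isT; have := wx3 deg_ge; lra.
- by have := leq_trans deg_ge deg3.
Qed.

Lemma vertex_weight_ge (S : {set T}) j y : 2 * L + g < 0 -> (j < #|S|)%N ->
  j%:R * (2 * L + g) + L <= wset w S -> y \in S -> L <= w y.
Proof.
move=> D_lt0 jS heavyS yS.
have Sy : wset w S = w y + wset w (S :\ y).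
  by rewrite (@wset_setD S [set y]) ?sub1set // /wset big_set1.
have rest_le := sum_le_card (P := S :\ y) (fun v _ => w_le v).
have : #|S :\ y|%:R * (2 * L + g) <= j%:R * (2 * L + g).
  have := cardsD1 y S; rewrite yS add1n => cardS.
  by rewrite ler_wnM2r ?(ltW D_lt0) // ler_nat -ltnS -cardS.
rewrite -/(wset w (S :\ y)) in rest_le; lra.
Qed.

Lemma cut_edge_exists (S : {set T}) j : connected_in S -> (j.+1 < #|S|)%N ->
  j.+1%:R * (2 * L + g) + L <= wset w S ->
  exists p v, [/\ e p v, p \in S, v \in S,
    L <= wset w (branch S p v) <= 2 * L + g & (j < #|S :\: branch S p v|)%N].
Proof.
move=> cS jS heavyS; have S2 : (1 < #|S|)%N by apply: leq_ltn_trans jS.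
have leaf_case p v : v \in S -> branch S p v = [set v] -> (j < #|S :\: branch S p v|)%N.
  by move=> vS ->; move: jS; rewrite (cardsD1 v S) vS.
have [D_lt0 | D_ge0] := ltP (2 * L + g) 0.
  (* Then every vertex of [S] weighs at least [L], so any leaf edge will do. *)
  have [p [v [epv pS vS Av]]] := leaf_edge cS S2.
  exists p, v; split; rewrite ?leaf_case // Av /wset big_set1 w_le andbT.
  exact: vertex_weight_ge D_lt0 jS heavyS vS.
have heavy : 3 * L + g <= wset w S.
  have : 0 <= j%:R * (2 * L + g) by apply: mulr_ge0.
  by rewrite mulrSr in heavyS; lra.
(* A heavy branch with fewest vertices has only light sub-branches. *)
have [p [v [epv pS vS LA minA]]] := min_branch_edge (heavy_edge_exists cS S2 heavy).
have light : {in nbrs_in (S :\ p) v, forall u, wset w (branch S v u) < L}.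
  by move=> u /minA; rewrite -ltNge.
have [A_le A_lt] := light_branch_weight epv vS light.
exists p, v; split; rewrite ?LA ?A_le //.
have [/cards0_eq nv0 | nv_gt0] := posnP #|nbrs_in (S :\ p) v|.
  by apply: leaf_case; rewrite // /branch nbrs_in0 // in_setD1 vS eq_sym edge_neq.
rewrite ltnNge; apply/negP => Bj.
have AS : branch S p v \subset S by apply: subset_trans (branch_subset _ _) (subsetDl _ _).
have B_le := sum_le_card (P := S :\: branch S p v) (fun u _ => w_le u).
have : #|S :\: branch S p v|%:R * (2 * L + g) <= j%:R * (2 * L + g).
  by rewrite ler_wpM2r // ler_nat.
have := A_lt nv_gt0; move: heavyS; rewrite (wset_setD AS) mulrSr.
rewrite -/(wset w (S :\: branch S p v)) in B_le; lra.
Qed.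

Lemma heavy_partition j (S : {set T}) : connected_in S -> (j < #|S|)%N ->
  j%:R * (2 * L + g) + L <= wset w S ->
  exists F, [/\ edges_in S F, #|F| = j & {in S, forall x, L <= wset w (cut_comp S F x)}].
Proof.
elim: j S => [|j IHj] S cS jS heavyS.
  exists set0; split=> [f||x xS]; rewrite ?inE ?cards0 //.
  suff -> : cut_comp S set0 x = S by move: heavyS; rewrite mul0r add0r.
  rewrite -[RHS](comp_in_connected cS xS); apply/setP => y; rewrite !inE.
  by apply: eq_connect => a b; rewrite /cut_rel /induced inE andbT.
have [p [v [epv pS vS /andP[LA A_le] jB]]] := cut_edge_exists cS jS heavyS.
set A := branch S p v in LA A_le jB.
have AS : A \subset S by apply: subset_trans (branch_subset _ _) (subsetDl _ _).
have heavyB : j%:R * (2 * L + g) + L <= wset w (S :\: A).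
  by move: heavyS; rewrite (wset_setD AS) mulrSr; lra.
have [F' [F'B cardF' heavyF']] := IHj _ (connected_in_compl epv pS vS cS) jB heavyB.
exists ([set p; v] |: F'); split.
- move=> f; rewrite in_setU1 => /orP[/eqP -> | /F'B[a [b [aB bB eab ->]]]].
    by exists p, v.
  by exists a, b; split => //; [move: aB | move: bB]; rewrite in_setD => /andP[].
- by rewrite cardsU1 (cut_edge_notin F'B) cardF'.
- move=> x xS; case xA: (x \in A); first by rewrite (cut_comp_branch epv vS F'B xA).
  have xB : x \in S :\: A by rewrite in_setD xA xS.
  by rewrite (cut_comp_compl epv vS F' xB); apply: heavyF'.
Qed.

End Weights.

End Forest.

Local Open Scope ring_scope.

Lemma le_seqmax (R : realFieldType) (s : seq R) x : x \in s -> x <= seqmax s.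
Proof.
rewrite /seqmax; elim: s (head 0 s) => [|y s IHs] a //=.
rewrite inE => /orP[/eqP ->|xs]; first by rewrite le_max lexx.
by rewrite le_max (IHs a xs) orbT.
Qed.

Lemma seqmin_ge (R : realFieldType) (s : seq R) c :
  s != [::] -> {in s, forall x, c <= x} -> c <= seqmin s.
Proof.
rewrite /seqmin => s_nil cs.
have : c <= head 0 s by case: s s_nil cs => // y s _ cs; apply: cs; rewrite mem_head.
elim: s {s_nil} cs (head 0 s) => [|y s IHs] cs a //= ca.
by rewrite le_min cs ?mem_head // IHs // => x xs; rewrite cs // inE xs orbT.
Qed.

Section Beta.
Variables (R : realFieldType) (T : finType) (e : rel T) (w : T -> R).

Lemma beta_ge k c (F : {set {set T}}) : (0 < #|T|)%N -> F \subset edges e -> #|F| = k.-1 ->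
  (forall x, c <= wset w [set y | connect (del_rel e F) x y]) -> c <= beta e w k.
Proof.
move=> T0 Fe cardF heavyF; apply: (@le_trans _ _ (min_comp_weight e w F)).
  apply: seqmin_ge => [|r /mapP[C]]; last by rewrite mem_enum => /imsetP[x _ ->] ->.
  have [x _] := card_gt0P T0.
  have : [set y | connect (del_rel e F) x y] \in components e F by apply/imsetP; exists x.
  by rewrite -mem_enum; case: (enum _).
by apply/le_seqmax/map_f; rewrite mem_filter Fe cardF eqxx mem_enum.
Qed.

Lemma beta_lower_bound (L g : R) j : is_tree e ->
  (forall v, deg e v <= 3)%N -> (forall v, w v <= 2 * L + g) ->
  (forall v, (2 <= deg e v)%N -> w v <= L + g) -> (forall v, (3 <= deg e v)%N -> w v <= g) ->
  (j < #|T|)%N -> j%:R * (2 * L + g) + L <= wT w -> L <= beta e w j.+1.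
Proof.
move=> [T0 sym_e irr_e cT acyc] deg3 w1 w2 w3 jT heavyT.
have cTT : connected_in e [set: T].
  by move=> x y _ _; rewrite (eq_connect (e' := e)) // => a b; rewrite /induced !inE !andbT.
have := heavy_partition sym_e irr_e acyc w1 w2 w3 deg3 cTT; rewrite cardsT.
have -> : wset w [set: T] = wT w by apply: eq_bigl => v; rewrite inE.
case/(_ j jT heavyT) => F [FT cardF heavyF]; apply: (beta_ge (F := F)) => // [|x].
  by apply/subsetP => f /FT[a [b [_ _ eab ->]]]; apply/imset2P; exists a b; rewrite ?inE.
have -> : [set y | connect (del_rel e F) x y] = cut_comp e [set: T] F x.
  by apply/setP => y; rewrite !inE; apply: eq_connect => a b; rewrite /cut_rel /del_rel !inE.
exact: heavyF.
Qed.

End Beta.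

Lemma quasi_binary_deg_le3 (T : finType) (e : rel T) :
  is_quasi_binary_tree e -> forall v, (deg e v <= 3)%N.
Proof.
case=> _ [B [eB [f [[_ [r [dr degB]]] f_inj fe]]]] v.
have degB3 b : (deg eB b <= 3)%N by have [-> | /degB[] ->] := eqVneq b r; rewrite ?dr.
apply: leq_trans (degB3 (f v)).
rewrite /deg -(card_imset [set u | e v u] f_inj); apply: subset_leq_card.
by apply/subsetP => y /imsetP[u]; rewrite !inE => evu ->; apply: fe.
Qed.

Lemma tree_deg_gt0 (T : finType) (e : rel T) v :
  is_tree e -> (1 < #|T|)%N -> (0 < deg e v)%N.
Proof.
case=> _ _ _ cT _ T2; have : (0 < #|predC1 v|)%N by rewrite cardC1; case: #|T| T2.
case/card_gt0P => y; rewrite !inE eq_sym => vy.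
have [u evu] := connect_neq_step (cT v y) vy.
by apply/card_gt0P; exists u; rewrite inE.
Qed.

Lemma threshold_bounds (R : realFieldType) (K W gamma L o1 o2 : R) :
  2 <= K -> L * (2 * K - 1) = W - (K - 1) * gamma ->
  (2 * K - 1) / 2 * o1 - gamma / 2 <= W -> (2 * K - 1) * o2 - K * gamma <= W ->
  [/\ o1 <= 2 * L + gamma, o2 <= L + gamma & (K - 1) * (2 * L + gamma) + L = W].
Proof.
move=> K2 L_def o1W o2W; have D_gt0 : 0 < 2 * K - 1 by lra.
have scaled c : (2 * K - 1) * (c * L + gamma) = c * W + (K * (2 - c) + c - 1) * gamma.
  by rewrite mulrDr mulrCA (mulrC _ L) L_def; ring.
split.
- by rewrite -(ler_pM2l D_gt0) scaled; lra.
- by rewrite -(ler_pM2l D_gt0) -[L]mul1r scaled; lra.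
- have -> : W = L * (2 * K - 1) + (K - 1) * gamma by rewrite L_def; ring.
  ring.
Qed.

Theorem theorem2 (R : realFieldType) (T : finType) (e : rel T) (w : T -> R)
    (k : nat) (gamma omega1 omega2 : R) :
  is_quasi_binary_tree e ->
  (2 <= k)%N -> (k <= #|T| - 1)%N ->
  is_omega e w 1 omega1 -> is_omega e w 2 omega2 ->
  (* gamma >= omega_3 (maximum over the possibly empty set of degree-3 vertices) *)
  (forall v, (3 <= deg e v)%N -> w v <= gamma) ->
  wT w >= Num.max ((2 * k%:R - 1) / 2 * omega1 - gamma / 2)
                  ((2 * k%:R - 1) * omega2 - k%:R * gamma) ->
  beta e w k >= (wT w - (k%:R - 1) * gamma) / (2 * k%:R - 1).
Proof.
move=> qbT k2 kT [_ o1_max] [_ o2_max] w3; rewrite ge_max => /andP[o1W o2W].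
have T2 : (1 < #|T|)%N by lia.
set L := (wT w - _) / _.
have K2 : 2 <= k%:R :> R by rewrite (ler_nat R 2 k).
have L_def : L * (2 * k%:R - 1) = wT w - (k%:R - 1) * gamma.
  by rewrite mulfVK // gt_eqF //; lra.
have [o1_le o2_le wT_eq] := threshold_bounds K2 L_def o1W o2W.
have kS : k%:R = k.-1%:R + 1 :> R by rewrite -mulrSr prednK // ltnW.
rewrite -(prednK (ltnW k2)); apply: (beta_lower_bound (g := gamma)) => //.
- exact: qbT.1.
- exact: quasi_binary_deg_le3.
- by move=> v; apply: le_trans (o1_max v (tree_deg_gt0 v qbT.1 T2)) o1_le.
- by move=> v /o2_max /le_trans; apply.
- lia.
- by rewrite -wT_eq kS addrK.
Qed.
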